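(* Consider the queueing system in the context under MaxWeight with a diagonal matrix $\Delta$ with positive diagonal entries, in overload ($\rho\notin\mathcal{P}$). Let $H=\limsup_{t\to\infty}\langle \frac{X(t)}{t},\Delta\frac{X(t)}{t}\rangle$ and let $\eta$ be the limit of $X(t_c)/t_c$ along an increasing unbounded sequence $\{t_c\}$ with $\langle\eta,\Delta\eta\rangle=H$. Then for every $\epsilon\in(0,1)$, $$-\Big[\langle\rho,\Delta\eta\rangle-\max_{S\in\mathcal{S}}\langle S,\Delta\eta\rangle\Big]\frac{\epsilon}{1-\epsilon}+\langle\eta,\Delta\eta\rangle\frac{1}{1-\epsilon}\ge\langle\eta,\Delta\eta\rangle.$$
   Context: Model: $Q$ queues, finite set $\mathcal{S}=\{S_1,\dots,S_N\}\subset\mathbb{R}^Q_{\ge0}$, discrete time. Arrivals $A(t)$ with $0\le A_q(t)\le\bar A_q<\infty$ and $\rho_q=\lim_{t\to\infty}\frac1t\sum_{s=0}^{t-1}A_q(s)\in(0,\infty)$. Departures $D_q(t)=\min\{S_q(t),X_q(t)\}$, $X(t+1)=X(t)+A(t)-D(t)$, $X(0)=0$, with $S(t)\in\arg\max_{S\in\mathcal{S}}\langle S,\Delta X(t)\rangle$. Stability region $\mathcal{P}=\{r\in\mathbb{R}^Q_{\ge0}: r\le\sum_n\alpha_nS_n\text{ for some }\alpha_n\ge0,\sum_n\alpha_n=1\}$. *)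

From HB Require Import structures.
From mathcomp Require Import all_boot all_order all_algebra.
From mathcomp Require Import all_classical all_reals all_analysis.
Set Implicit Arguments. Unset Strict Implicit. Unset Printing Implicit Defensive.
Import Order.TTheory GRing.Theory Num.Theory.
Local Open Scope ring_scope.

(* Vectors in R^Q are functions 'I_Q -> R.  The diagonal matrix Delta is
   represented by its diagonal d : 'I_Q -> R. *)

Definition ipD {R : realType} {Q : nat} (d x y : 'I_Q -> R) : R :=
  \sum_(q < Q) x q * (d q * y q).

Definition maxSD {R : realType} {Q N : nat} (Ss : 'I_N.+1 -> 'I_Q -> R)
  (d y : 'I_Q -> R) : R :=
  \big[Num.max/ipD d (Ss ord0) y]_(n < N.+1) ipD d (Ss n) y.

Definition in_stab_region {R : realType} {Q N : nat} (Ss : 'I_N.+1 -> 'I_Q -> R)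
  (r : 'I_Q -> R) : Prop :=
  (forall q, 0 <= r q) /\
  exists alpha : 'I_N.+1 -> R,
    (forall n, 0 <= alpha n) /\ \sum_(n < N.+1) alpha n = 1 /\
    forall q, r q <= \sum_(n < N.+1) alpha n * Ss n q.

(* Fix a = 1/m and compare V(x) = <x, Delta x> at T = t_c and at T' = T + aT.  By convexity,
   V(X(T')) >= V(X(T)) + 2 <X(T), Delta (X(T') - X(T))>; the increment is the arrivals minus the
   departures, the departures are dominated by schedules, and every schedule S has weight
   <S, Delta X(T)/T> < max_S <S, Delta eta> + e once c is large.  Dividing by T^2, letting c go to
   infinity and bounding V(X(T')/T') by H + e through the limsup gives
   H + 2a <rho, Delta eta> - 2a (max_S <S, Delta eta> + e) <= (H + e) (1 + a)^2.
   Letting e -> 0, dividing by a and letting a -> 0 leaves <rho, Delta eta> - max_S <S, Delta eta> <= H,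
   which is the claim multiplied by 1 - eps. *)

From HB Require Import structures.
From mathcomp Require Import all_boot all_order all_algebra.
From mathcomp Require Import all_classical all_reals all_analysis.
From mathcomp Require Import ring lra.
Import Order.TTheory GRing.Theory Num.Theory.
Import numFieldNormedType.Exports.
Local Open Scope classical_set_scope.
Local Open Scope ring_scope.

Section weighted_inner_product.
Context {R : realType} {Q : nat} (d : 'I_Q -> R).

Lemma ipDC (x y : 'I_Q -> R) : ipD d x y = ipD d y x.
Proof. by apply: eq_bigr => q _; ring. Qed.

Lemma ipD_mulr (x y : 'I_Q -> R) (a : R) :
  ipD d x (fun q => y q * a) = ipD d x y * a.
Proof. by rewrite /ipD mulr_suml; apply: eq_bigr => q _; ring. Qed.

Lemma ipD_scale (x y : 'I_Q -> R) (a : R) :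
  ipD d (fun q => x q * a) (fun q => y q * a) = ipD d x y * a ^+ 2.
Proof. by rewrite /ipD mulr_suml; apply: eq_bigr => q _; ring. Qed.

Lemma cvg_ipD {T : Type} {F : set_system T} {FF : Filter F}
    {x y : T -> 'I_Q -> R} {lx ly : 'I_Q -> R} :
  (forall q, (fun t => x t q) @ F --> lx q) ->
  (forall q, (fun t => y t q) @ F --> ly q) ->
  (fun t => ipD d (x t) (y t)) @ F --> ipD d lx ly.
Proof.
move=> xl yl; apply: cvg_big => [|q _]; first exact: add_continuous.
by apply: cvgM; [exact: xl | apply: cvgM; [exact: cvg_cst | exact: yl]].
Qed.

Hypothesis d_gt0 : forall q, 0 < d q.

Lemma ipD_self_ge0 (x : 'I_Q -> R) : 0 <= ipD d x x.
Proof.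
by apply: sumr_ge0 => q _; rewrite mulrCA -expr2 mulr_ge0 ?sqr_ge0 ?ltW.
Qed.

Lemma ipD_tangent_le (x y : 'I_Q -> R) :
  ipD d x x + 2 * ipD d x (fun q => y q - x q) <= ipD d y y.
Proof.
have -> : ipD d y y = ipD d x x + 2 * ipD d x (fun q => y q - x q)
                      + ipD d (fun q => y q - x q) (fun q => y q - x q).
  by rewrite /ipD mulr_sumr -!big_split /=; apply: eq_bigr => q _; ring.
by rewrite lerDl ipD_self_ge0.
Qed.

Lemma ler_ipDr (x y z : 'I_Q -> R) :
  (forall q, 0 <= x q) -> (forall q, y q <= z q) -> ipD d x y <= ipD d x z.
Proof.
move=> x_ge0 yz; apply: ler_sum => q _.
by rewrite ler_wpM2l ?x_ge0 // ler_wpM2l ?yz ?ltW.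
Qed.

Lemma ipD_drift_ge {k : nat} {x y a : 'I_Q -> R} {D S : 'I_k -> 'I_Q -> R} {B : R} :
  (forall q, 0 <= x q) -> (forall i q, D i q <= S i q) ->
  (forall i, ipD d (S i) x <= B) ->
  (forall q, y q = x q + a q - \sum_(i < k) D i q) ->
  ipD d x x + 2 * ipD d x a - 2 * (k%:R * B) <= ipD d y y.
Proof.
move=> x_ge0 DS SB yE; apply: le_trans (ipD_tangent_le x y).
rewrite -addrA lerD2l -mulrBr ler_pM2l //.
have -> : ipD d x (fun q => y q - x q) = ipD d x a - \sum_(i < k) ipD d x (D i).
  rewrite exchange_big /ipD -sumrB; apply: eq_bigr => q _.
  by rewrite yE -!mulr_sumr; ring.
have -> : k%:R * B = \sum_(i < k) B by rewrite sumr_const card_ord mulr_natl.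
rewrite lerD2l lerN2.
apply: ler_sum => i _; apply: le_trans (SB i).
by rewrite [ipD d (S i) x]ipDC; exact: ler_ipDr.
Qed.

End weighted_inner_product.

Lemma cvgny_ge (s s' : nat -> nat) :
  (forall c, s c <= s' c)%N -> s @ \oo --> \oo -> s' @ \oo --> \oo.
Proof.
move=> le_ss' /cvgnyPge s_oo; apply/cvgnyPge => n.
by apply: filterS (s_oo n) => c /leq_trans; apply.
Qed.

Lemma cvgny_increasing (s : nat -> nat) : (forall c, s c < s c.+1)%N -> s @ \oo --> \oo.
Proof.
move=> s_incr; apply: (@cvgny_ge id) cvg_id => c.
by elim: c => // c IH; exact: leq_ltn_trans IH (s_incr c).
Qed.

Section real_sequences.
Context {R : realType}.

Lemma cvg_invn : (fun n : nat => (n%:R : R)^-1) @ \oo --> 0.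
Proof.
apply/gtr0_cvgV0; first by near=> n; rewrite ltr0n; near: n; exact: nbhs_infty_gt.
exact/cvgrnyP.
Unshelve. all: by end_near.
Qed.

Lemma cvg_divn_ratio (m : nat) : (0 < m)%N ->
  (fun n : nat => ((n %/ m)%:R / n%:R : R)) @ \oo --> (m%:R^-1 : R).
Proof.
move=> m0; apply: (@squeeze_cvgr _ _ _ _ (fun n => m%:R^-1 - n%:R^-1) (fun n => m%:R^-1)).
- near=> n.
  have nR : 0 < n%:R :> R by rewrite ltr0n; near: n; exact: nbhs_infty_gt.
  have mR : 0 < m%:R :> R by rewrite ltr0n.
  move: (leq_trunc_div n m) (ltn_ceil n m0).
  rewrite -(ler_nat R) -(ltr_nat R) !natrM -natr1 => lo hi.
  apply/andP; split; last by rewrite ler_pdivrMr // mulrC ler_pdivlMr.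
  rewrite lerBlDr -[X in _ + X]mul1r -mulrDl ler_pdivlMr //.
  by rewrite mulrC ler_pdivrMr // ltW.
- by rewrite -[X in _ --> X]subr0; apply: cvgB; [exact: cvg_cst | exact: cvg_invn].
- exact: cvg_cst.
Unshelve. all: by end_near.
Qed.

Lemma limn_esup_lt_near (u : nat -> R) (z : R) :
  (limn_esup (fun t => (u t)%:E) < z%:E)%E -> \forall t \near \oo, u t < z.
Proof.
rewrite /limn_esup /limf_esup => /ereal_inf_lt [_ [V V_oo <-]] supV_lt.
apply: filterS V_oo => t Vt; rewrite -lte_fin; apply: le_lt_trans supV_lt.
by apply: ereal_sup_ubound; exists t.
Qed.

Lemma ler_addharmonic (x y c : R) : (forall k, x <= y + harmonic k * c) -> x <= y.
Proof.
move=> xy; apply: (ler_cvg_to (cvg_cst x) (_ : (fun k => y + harmonic k * c) @ \oo --> y)).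
  rewrite -[X in _ --> X]addr0 -(mul0r c).
  by apply: cvgD; [exact: cvg_cst | apply: cvgMl; exact: cvg_harmonic].
exact: nearW.
Qed.

Lemma le_of_window_limits (H P M : R) :
  (forall (m : nat) (e : R), (0 < m)%N -> 0 < e ->
     H + 2 * (m%:R^-1 * P) - 2 * (m%:R^-1 * (M + e)) <= (H + e) * (1 + m%:R^-1) ^+ 2) ->
  P - M <= H.
Proof.
move=> window; apply: (ler_addharmonic _ _ (H / 2)) => k.
have a_gt0 : 0 < harmonic k :> R := harmonic_gt0 k.
have : H + 2 * (harmonic k * P) - 2 * (harmonic k * M) <= H * (1 + harmonic k) ^+ 2.
  apply: (ler_addharmonic _ _ ((1 + harmonic k) ^+ 2 + 2 * harmonic k)) => j.
  have := window k.+1 (harmonic j) (ltn0Sn k) (harmonic_gt0 j).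
  by rewrite -[k.+1%:R^-1]/(harmonic k); clear window; lra.
by clear window; move=> le_a; rewrite -(ler_pM2l a_gt0); lra.
Qed.

End real_sequences.

Section queue_dynamics.
Variables (R : realType) (Q N : nat) (Ss : 'I_N.+1 -> 'I_Q -> R) (d : 'I_Q -> R)
  (A X : nat -> 'I_Q -> R) (sel : nat -> 'I_N.+1).
Hypothesis d_gt0 : forall q, 0 < d q.
Hypothesis A_ge0 : forall t q, 0 <= A t q.
Hypothesis X0 : forall q, X 0%N q = 0.
Hypothesis X_next :
  forall t q, X t.+1 q = X t q + A t q - Num.min (Ss (sel t) q) (X t q).

Definition arrivals (t : nat) (q : 'I_Q) : R := \sum_(s < t) A s q.

Definition fluid (t : nat) (q : 'I_Q) : R := X t q / t%:R.

Lemma departure_le_schedule t q : Num.min (Ss (sel t) q) (X t q) <= Ss (sel t) q.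
Proof. by rewrite ge_min lexx. Qed.

Lemma departure_le_queue t q : Num.min (Ss (sel t) q) (X t q) <= X t q.
Proof. by rewrite ge_min lexx orbT. Qed.

Lemma queue_ge0 t q : 0 <= X t q.
Proof.
elim: t q => [|t IH] q; first by rewrite X0.
by rewrite X_next; have := A_ge0 t q; have := departure_le_queue t q; lra.
Qed.

Lemma queue_window (T j : nat) q :
  X (T + j)%N q = X T q + (arrivals (T + j) q - arrivals T q)
     - \sum_(i < j) Num.min (Ss (sel (T + i)%N) q) (X (T + i)%N q).
Proof.
elim: j => [|j IH]; first by rewrite addn0 big_ord0 subrr addr0 subr0.
by rewrite addnS X_next {1}IH /arrivals (big_ord_recr (T + j)) (big_ord_recr j) /=; lra.
Qed.

(* The drift over the window [T, T + K], divided by T^2, with the arrivals expressed through the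
   empirical rates on [0, T + K] and [0, T] so that every term has a limit along t_c. *)
Definition window_bound (T K : nat) (B : R) : R :=
  ipD d (fluid T) (fluid T)
  + 2 * ipD d (fluid T) (fun q => arrivals (T + K) q / (T + K)%:R * (1 + K%:R / T%:R)
                                  - arrivals T q / T%:R)
  - 2 * (K%:R / T%:R * B).

Lemma window_bound_le (T K : nat) (B : R) : (0 < T)%N ->
  (forall n, ipD d (Ss n) (fluid T) <= B) ->
  window_bound T K B <= ipD d (fluid (T + K)) (fluid (T + K)) * (1 + K%:R / T%:R) ^+ 2.
Proof.
move=> T0 SB.
have TK0 : 0 < (T + K)%:R :> R by rewrite ltr0n ltn_addr.
rewrite -(ltr0n R) in T0.
have ratioE : 1 + K%:R / T%:R = (T + K)%:R / T%:R :> R by rewrite natrD mulrDl divff ?gt_eqF.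
have arrE : (fun q => arrivals (T + K) q / (T + K)%:R * (1 + K%:R / T%:R) - arrivals T q / T%:R)
            = (fun q => (arrivals (T + K) q - arrivals T q) / T%:R).
  by apply: funext => q; rewrite ratioE; field; rewrite -natrD !gt_eqF.
have SB' i : ipD d (Ss (sel (T + i)%N)) (X T) <= T%:R * B.
  by rewrite mulrC -ler_pdivrMr // -ipD_mulr; exact: SB.
have := ipD_drift_ge d d_gt0 (queue_ge0 T) (fun i => departure_le_schedule (T + i))
  SB' (queue_window T K).
rewrite /window_bound arrE /fluid !ipD_scale ratioE => drift.
set a := ipD d (X T) (X T); set b := ipD d (X T) _; set c := ipD d (X (T + K)) _.
have -> : c * (T + K)%:R^-1 ^+ 2 * ((T + K)%:R / T%:R) ^+ 2 = c / T%:R ^+ 2.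
  by field; rewrite -natrD !gt_eqF.
have -> : a * T%:R^-1 ^+ 2 + 2 * (b * T%:R^-1 ^+ 2) - 2 * (K%:R / T%:R * B)
          = (a + 2 * b - 2 * (K%:R * (T%:R * B))) / T%:R ^+ 2.
  by field; rewrite gt_eqF.
by apply: ler_wpM2r; rewrite ?invr_ge0 ?exprn_ge0 // ltW.
Qed.

Variables (rho eta : 'I_Q -> R) (tc : nat -> nat).
Hypothesis arrival_rate : forall q, (fun t => arrivals t q / t%:R) @ \oo --> rho q.
Hypothesis tc_increasing : forall c, (tc c < tc c.+1)%N.
Hypothesis fluid_tc_cvg : forall q, (fun c => fluid (tc c) q) @ \oo --> eta q.
Hypothesis fluid_limsup :
  limn_esup (fun t => (ipD d (fluid t) (fluid t))%:E) = (ipD d eta eta)%:E.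

Let tc_cvgy : tc @ \oo --> \oo := cvgny_increasing _ tc_increasing.

Let window_end_cvgy (m : nat) : (fun c => tc c + tc c %/ m)%N @ \oo --> \oo :=
  cvgny_ge _ _ (fun c => leq_addr _ _) tc_cvgy.

Lemma cvg_tc_ratio (m : nat) : (0 < m)%N ->
  (fun c => (tc c %/ m)%:R / (tc c)%:R) @ \oo --> (m%:R^-1 : R).
Proof. by move=> m0; exact: cvg_comp _ _ tc_cvgy (cvg_divn_ratio _ m0). Qed.

Lemma cvg_window_bound (m : nat) (B : R) : (0 < m)%N ->
  (fun c => window_bound (tc c) (tc c %/ m) B) @ \oo -->
  ipD d eta eta + 2 * (m%:R^-1 * ipD d rho eta) - 2 * (m%:R^-1 * B).
Proof.
move=> m0; have ratio := cvg_tc_ratio _ m0.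
have -> : m%:R^-1 * ipD d rho eta = ipD d eta (fun q => rho q * (1 + m%:R^-1) - rho q).
  by rewrite /ipD mulr_sumr; apply: eq_bigr => q _; ring.
apply: cvgB; first apply: cvgD; first exact: cvg_ipD.
- apply: cvgMr; apply: cvg_ipD => // q; apply: cvgB.
    apply: cvgM; first exact: cvg_comp _ _ (window_end_cvgy m) (arrival_rate q).
    by apply: cvgD; [exact: cvg_cst | exact: ratio].
  exact: cvg_comp _ _ tc_cvgy (arrival_rate q).
- by apply: cvgMr; apply: cvgMl; exact: ratio.
Qed.

Lemma window_bound_le_near (m : nat) (e : R) : 0 < e ->
  \forall c \near \oo, window_bound (tc c) (tc c %/ m) (maxSD Ss d eta + e)
                      <= (ipD d eta eta + e) * (1 + (tc c %/ m)%:R / (tc c)%:R) ^+ 2.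
Proof.
move=> e0.
have sched_lt n : \forall c \near \oo, ipD d (Ss n) (fluid (tc c)) < maxSD Ss d eta + e.
  apply: cvgr_lt (cvg_ipD d (fun q => cvg_cst (Ss n q)) fluid_tc_cvg) _ _.
  apply: (@le_lt_trans _ _ (maxSD Ss d eta)); first exact: le_bigmax.
  by rewrite ltrDl.
have limsup_lt : \forall c \near \oo,
    ipD d (fluid (tc c + tc c %/ m)) (fluid (tc c + tc c %/ m)) < ipD d eta eta + e.
  apply: (window_end_cvgy m (fun t => ipD d (fluid t) (fluid t) < ipD d eta eta + e)).
  by apply: limn_esup_lt_near; rewrite fluid_limsup lte_fin ltrDl.
near=> c.
have tc_gt0 : (0 < tc c)%N by near: c; exact: (cvgnyPgt tc).1 tc_cvgy 0%N.
have sched_le : forall n, ipD d (Ss n) (fluid (tc c)) <= maxSD Ss d eta + e.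
  by near: c; apply: filter_forall => n; apply: filterS (sched_lt n) => c /ltW.
apply: le_trans (window_bound_le (tc c) (tc c %/ m) _ tc_gt0 sched_le) _.
apply: ler_wpM2r; first exact: sqr_ge0.
by apply: ltW; near: c.
Unshelve. all: by end_near.
Qed.

Lemma window_limit (m : nat) (e : R) : (0 < m)%N -> 0 < e ->
  ipD d eta eta + 2 * (m%:R^-1 * ipD d rho eta) - 2 * (m%:R^-1 * (maxSD Ss d eta + e))
  <= (ipD d eta eta + e) * (1 + m%:R^-1) ^+ 2.
Proof.
move=> m0 e0; apply: ler_cvg_to (cvg_window_bound _ _ m0) _ (window_bound_le_near m _ e0).
apply: cvgMr; rewrite expr2; under eq_cvg do rewrite expr2.
have ratio := cvg_tc_ratio _ m0.
by apply: cvgM; apply: cvgD => //; exact: cvg_cst.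
Qed.

End queue_dynamics.

Theorem lemma6 (R : realType) (Q N : nat)
  (Ss : 'I_N.+1 -> 'I_Q -> R)          (* schedule set S = {S_1,...,S_N} *)
  (d : 'I_Q -> R)                      (* diagonal of Delta *)
  (A : nat -> 'I_Q -> R) (Abar : 'I_Q -> R) (rho : 'I_Q -> R)
  (X : nat -> 'I_Q -> R) (sel : nat -> 'I_N.+1)
  (tc : nat -> nat) (eta : 'I_Q -> R) :
  (forall n q, 0 <= Ss n q) ->
  (forall q, 0 < d q) ->
  (forall t q, 0 <= A t q <= Abar q) ->
  (forall q, (fun t : nat => (\sum_(s < t) A s q) / t%:R) @ \oo --> rho q) ->
  (forall q, 0 < rho q) ->
  (* MaxWeight dynamics *)
  (forall q, X 0%N q = 0) ->
  (forall t n, ipD d (Ss n) (X t) <= ipD d (Ss (sel t)) (X t)) ->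
  (forall t q, X t.+1 q = X t q + A t q - Num.min (Ss (sel t) q) (X t q)) ->
  (* overload *)
  ~ in_stab_region Ss rho ->
  (* eta : limit along an increasing unbounded sequence achieving the limsup H *)
  (forall c, (tc c < tc c.+1)%N) ->
  (forall q, (fun c : nat => X (tc c) q / (tc c)%:R) @ \oo --> eta q) ->
  limn_esup (fun t : nat =>
      (ipD d (fun q => X t q / t%:R) (fun q => X t q / t%:R))%:E)
    = (ipD d eta eta)%:E ->
  forall eps : R, 0 < eps < 1 ->
    - (ipD d rho eta - maxSD Ss d eta) * (eps / (1 - eps))
      + ipD d eta eta * (1 / (1 - eps))
    >= ipD d eta eta.
Proof.
move=> _ d_gt0 A_bnd arrival_rate _ X0 _ X_next _ tc_incr fluid_cvg fluid_limsup
  eps /andP[eps_gt0 eps_lt1].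
have A_ge0 t q : 0 <= A t q by case/andP: (A_bnd t q).
have : ipD d rho eta - maxSD Ss d eta <= ipD d eta eta.
  by apply: le_of_window_limits => m e; apply: window_limit.
move: (ipD d rho eta - maxSD Ss d eta) (ipD d eta eta) => gap H gap_le.
have -> : - gap * (eps / (1 - eps)) + H * (1 / (1 - eps)) = H + eps * (H - gap) / (1 - eps).
  by field; rewrite subr_eq0 gt_eqF.
by rewrite lerDl divr_ge0 ?mulr_ge0 ?subr_ge0 // ltW.
Qed.
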